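(* The construction $\mathrm{Env}$ is a functor from the category of $k$-coloured operads (with coloured operad morphisms) to the category of operads, and it preserves injections and surjections. Explicitly, the following hold. (i) For every coloured operad morphism $\phi:\mathcal C_1\to\mathcal C_2$, there is a well-defined operad morphism $\mathrm{Env}(\phi):\mathrm{Env}(\mathcal C_1)\to\mathrm{Env}(\mathcal C_2)$ determined by $\mathrm{Env}(\phi)(\mathfrak c(x))=\mathfrak c(\phi(x))$ for $x\in\mathcal C_1^+$. (ii) $\mathrm{Env}(\psi\circ\phi)=\mathrm{Env}(\psi)\circ\mathrm{Env}(\phi)$, and $\mathrm{Env}(\mathrm{id})=\mathrm{id}$. (iii) If $\phi$ is injective (resp. surjective), then $\mathrm{Env}(\phi)$ is injective (resp. surjective).
   Context: All operads are nonsymmetric operads in the category of sets. Fix $k\ge1$ and write $[k]=\{1,\dots,k\}$. A $k$-coloured operad $\mathcal C=\biguplus_{n\ge1}\mathcal C(n)$ assigns to each $x\in\mathcal C(n)$ an output colour $\mathrm{Out}(x)\in[k]$ and input colours $\mathrm{In}_1(x),\dots,\mathrm{In}_n(x)\in[k]$. It has partial compositions $x\circ_i y$, defined exactly when $\mathrm{Out}(y)=\mathrm{In}_i(x)$, satisfying the usual coloured operad axioms. It is assumed that $\mathcal C(1)=\{\mathbf 1_c:c\in[k]\}$ consists of units ($\mathbf 1_c$ has output and input colour $c$) and that each $\mathcal C(n)$ is finite. An operad is a $1$-coloured operad. A coloured operad morphism $\phi:\mathcal C_1\to\mathcal C_2$ between $k$-coloured operads is a map that preserves arities and commutes with the composition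 maps. Moreover, whenever $x\circ_i y$ is defined in $\mathcal C_1$, the composition $\phi(x)\circ_i\phi(y)$ is required to be defined in $\mathcal C_2$. Let $\mathcal C^+=\mathcal C\setminus\mathcal C(1)$. The enveloping operad $\mathrm{Env}(\mathcal C)$ is the quotient of the free uncoloured operad generated by the elements of $\mathcal C^+$ (colours forgotten, $x\in\mathcal C(n)$ being an $n$-ary generator) by the smallest operadic congruence $\equiv$ with $\mathfrak c(x)\circ_i\mathfrak c(y)\equiv\mathfrak c(x\circ_i y)$ whenever $x\circ_i y$ is defined in $\mathcal C$. Here $\mathfrak c(x)$ is the corolla (one-internal-node syntax tree) labelled $x$, and we also write $\mathfrak c(x)$ for its class. *)

From mathcomp Require Import all_boot.
Set Implicit Arguments.
Unset Strict Implicit.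
Unset Printing Implicit Defensive.

(* k-coloured nonsymmetric operads in Set, non-dependent presentation. *)
(* Elements live in one carrier type with an arity function; input    *)
(* positions are numbered 1..ar x as in the paper; comp x i y is the   *)
(* partial composition x o_i y, which is Some _ exactly when defined.  *)
(* list membership for arbitrary (non-eq) types *)
Fixpoint inlist (T : Type) (x : T) (s : seq T) : Prop :=
  match s with nil => False | cons y s' => y = x \/ inlist x s' end.

Record coloperad (k : nat) := ColOperad {
  carrier :> Type;
  ar : carrier -> nat;
  out : carrier -> 'I_k;
  inc : carrier -> nat -> 'I_k;
  comp : carrier -> nat -> carrier -> option carrier;
  unit : 'I_k -> carrier;
  ar_pos : forall x, 0 < ar x;
  ar_fin : forall n, exists s : seq carrier, forall x, ar x = n -> inlist x s;
  unit_ar : forall c, ar (unit c) = 1;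
  unit_out : forall c, out (unit c) = c;
  unit_inc : forall c, inc (unit c) 1 = c;
  ar1_unit : forall x, ar x = 1 -> exists c, x = unit c;
  compP : forall x i y,
    (exists z, comp x i y = Some z) <-> (1 <= i <= ar x /\ out y = inc x i);
  comp_ar : forall x i y z, comp x i y = Some z -> ar z = ar x + ar y - 1;
  comp_out : forall x i y z, comp x i y = Some z -> out z = out x;
  comp_inc : forall x i y z, comp x i y = Some z ->
    forall j, 1 <= j <= ar z ->
      inc z j = if j < i then inc x j
                else if j < i + ar y then inc y (j - i + 1)
                else inc x (j - ar y + 1);
  comp_unitl : forall x, comp (unit (out x)) 1 x = Some x;
  comp_unitr : forall x i, 1 <= i <= ar x -> comp x i (unit (inc x i)) = Some x;
  comp_seq : forall x y z i j, 1 <= i <= ar x -> 1 <= j <= ar y ->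
    obind (fun xy => comp xy (i + j - 1) z) (comp x i y)
    = obind (fun yz => comp x i yz) (comp y j z);
  comp_par : forall x y z i j, 1 <= i -> i < j -> j <= ar x ->
    obind (fun xy => comp xy (j + ar y - 1) z) (comp x i y)
    = obind (fun xz => comp xz i y) (comp x j z)
}.

Arguments ar {k C} _ : rename.
Arguments out {k C} _ : rename.
Arguments inc {k C} _ _ : rename.
Arguments comp {k C} _ _ _ : rename.

Definition colmorph k (C1 C2 : coloperad k) (f : C1 -> C2) : Prop :=
  (forall x : C1, ar (f x) = ar x) /\
  (forall (x y z : C1) i, comp x i y = Some z -> comp (f x) i (f y) = Some (f z)).

(* Free (uncoloured) nonsymmetric operad: planar syntax trees.         *)
(* Leaf is the unit; Node x ts is an internal node labelled x.         *)
Inductive tree (E : Type) : Type :=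
| Leaf : tree E
| Node : E -> list (tree E) -> tree E.
Arguments Leaf {E}.

Fixpoint leaves E (t : tree E) : nat :=
  match t with
  | Leaf => 1
  | Node _ ts => (fix g (l : list (tree E)) : nat :=
                    match l with nil => 0 | cons u l' => leaves u + g l' end) ts
  end.

(* well-formed trees over the generators C^+ (elements of arity >= 2) *)
Fixpoint wf k (C : coloperad k) (t : tree C) : bool :=
  match t with
  | Leaf => true
  | Node x ts => [&& size ts == ar x, 1 < ar x &
                    (fix g (l : list (tree C)) : bool :=
                       match l with nil => true | cons u l' => wf u && g l' end) ts]
  end.

Fixpoint graft E (t : tree E) (i : nat) (s : tree E) : tree E :=
  match t with
  | Leaf => if i == 1 then s else Leaf
  | Node x ts =>
      Node x ((fix g (l : list (tree E)) (i : nat) : list (tree E) :=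
                 match l with
                 | nil => nil
                 | cons u l' => if i <= leaves u then cons (graft u i s) l'
                                else cons u (g l' (i - leaves u))
                 end) ts i)
  end.

Definition corolla k (C : coloperad k) (x : C) : tree C := Node x (nseq (ar x) Leaf).

Fixpoint tmap E F (f : E -> F) (t : tree E) : tree F :=
  match t with
  | Leaf => Leaf
  | Node x ts => Node (f x) (map (tmap f) ts)
  end.

(* The congruence defining Env(C): smallest operadic congruence on the
   free operad (well-formed trees) with c(x) o_i c(y) == c(x o_i y). *)
Inductive envc k (C : coloperad k) : tree C -> tree C -> Prop :=
| envc_gen : forall (x y z : C) i, 1 < ar x -> 1 < ar y -> comp x i y = Some z ->
    envc (graft (corolla x) i (corolla y)) (corolla z)
| envc_refl : forall t, wf t -> envc t t
| envc_sym : forall t t', envc t t' -> envc t' t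
| envc_trans : forall t t' t'', envc t t' -> envc t' t'' -> envc t t''
| envc_ctx : forall t t' s s' i, envc t t' -> envc s s' -> 1 <= i <= leaves t ->
    envc (graft t i s) (graft t' i s').

(* Env(C) is the setoid (well-formed trees, envc).  An operad morphism
   Env(C1) -> Env(C2) is a map on representatives which is well defined
   on classes, preserves arity, and commutes with partial composition. *)
Definition env_morph k (C1 C2 : coloperad k) (F : tree C1 -> tree C2) : Prop :=
  (forall t, wf t -> wf (F t) /\ leaves (F t) = leaves t) /\
  (forall t t', envc t t' -> envc (F t) (F t')) /\
  (forall t s i, wf t -> wf s -> 1 <= i <= leaves t ->
      envc (F (graft t i s)) (graft (F t) i (F s))).

Definition env_injective k (C1 C2 : coloperad k) (F : tree C1 -> tree C2) : Prop :=
  forall t t', wf t -> wf t' -> envc (F t) (F t') -> envc t t'.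

Definition env_surjective k (C1 C2 : coloperad k) (F : tree C1 -> tree C2) : Prop :=
  forall s, wf s -> exists t, wf t /\ envc (F t) s.

Definition Env_map k (C1 C2 : coloperad k) (f : C1 -> C2) : tree C1 -> tree C2 :=
  tmap f.

From Pilot Require Import Defs.
From mathcomp Require Import all_boot zify.
From Stdlib Require Import Relation_Operators.
Set Implicit Arguments.
Unset Strict Implicit.
Unset Printing Implicit Defensive.

(* Env(phi) relabels the nodes of a tree along phi.  It respects the generating
   relations because phi preserves compositions, it is the only morphism sending
   c(x) to c(phi x) because every tree is an iterated grafting of corollas,
   functoriality is an identity of relabellings, and surjectivity lifts labels
   node by node.

   Injectivity needs a complete invariant of the congruence.  Normalise the
   children of a node, then absorb them into the root from left to right whenever
   the composition is defined; by the two associativity axioms the resulting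
   normal form is invariant under contracting any edge, so congruent trees have
   equal normal forms.  An injective morphism induces an injective map on
   colours, hence reflects definedness of compositions; relabelling therefore
   commutes with the normal form, and injectivity follows. *)

Section Trees.

Variable E : Type.
Implicit Types (x : E) (t s u : tree E) (ts cs : seq (tree E)).

Definition all_tree (P : tree E -> Prop) ts : Prop :=
  foldr (fun u acc => P u /\ acc) True ts.

Fixpoint tree_nested_ind (P : tree E -> Prop) (PL : P Leaf)
    (PN : forall x ts, all_tree P ts -> P (Node x ts)) t : P t :=
  match t with
  | Leaf => PL
  | Node x ts => PN x ts ((fix g (l : seq (tree E)) : all_tree P l :=
      match l with
      | nil => I
      | cons u l' => conj (tree_nested_ind PL PN u) (g l')
      end) ts)
  end.

Definition leaves_forest ts := sumn (map (@leaves E) ts).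

Definition graft_forest s := fix g ts (i : nat) : seq (tree E) :=
  match ts with
  | nil => nil
  | cons u ts' => if i <= leaves u then graft u i s :: ts'
                  else u :: g ts' (i - leaves u)
  end.

Lemma leaves_node x ts : leaves (Node x ts) = leaves_forest ts.
Proof. by elim: ts => //= t ts ->. Qed.

Lemma graft_node x ts i s : graft (Node x ts) i s = Node x (graft_forest s ts i).
Proof. by []. Qed.

Lemma graft_forest_cons s u ts i : graft_forest s (u :: ts) i =
  if i <= leaves u then graft u i s :: ts else u :: graft_forest s ts (i - leaves u).
Proof. by []. Qed.

Lemma leaves_forest_cons u ts : leaves_forest (u :: ts) = leaves u + leaves_forest ts.
Proof. by []. Qed.

Lemma leaves_forest_cat ts1 ts2 :
  leaves_forest (ts1 ++ ts2) = leaves_forest ts1 + leaves_forest ts2.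
Proof. by rewrite /leaves_forest map_cat sumn_cat. Qed.

Lemma leaves_forest_rcons ts u : leaves_forest (rcons ts u) = leaves_forest ts + leaves u.
Proof. by rewrite -cats1 leaves_forest_cat /leaves_forest /= addn0. Qed.

Lemma leaves_forest_nseq n : leaves_forest (nseq n Leaf) = n.
Proof. by elim: n => //= n; rewrite leaves_forest_cons => ->. Qed.

Lemma size_le_leaves_forest ts :
  all (fun u => 0 < leaves u) ts -> size ts <= leaves_forest ts.
Proof. by elim: ts => //= u ts IH /andP[u_gt0 /IH]; rewrite leaves_forest_cons; lia. Qed.

Lemma size_graft_forest s ts i : size (graft_forest s ts i) = size ts.
Proof. by elim: ts i => //= u ts IH i; case: ifP => //= _; rewrite IH. Qed.

Lemma graft_forest_cat s ts1 ts2 i : 0 < i ->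
  graft_forest s (ts1 ++ ts2) i =
    if i <= leaves_forest ts1 then graft_forest s ts1 i ++ ts2
    else ts1 ++ graft_forest s ts2 (i - leaves_forest ts1).
Proof.
elim: ts1 i => [|u ts1 IH] i i_gt0 /=; first by rewrite leqn0 (gtn_eqF i_gt0) subn0.
rewrite leaves_forest_cons; case: (leqP i (leaves u)) => iu; first by rewrite ifT //; lia.
rewrite IH; last by lia.
case: (leqP (i - leaves u) (leaves_forest ts1)) => i1; first by rewrite ifT //; lia.
by rewrite ifF ?subnDA //; lia.
Qed.

Lemma graft_forest_mid s ps u qs j : 0 < j <= leaves u ->
  graft_forest s (ps ++ u :: qs) (leaves_forest ps + j) = ps ++ graft u j s :: qs.
Proof.
move=> /andP[j_gt0 ju]; rewrite graft_forest_cat; last by lia.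
by rewrite ifF ?addKn /= ?ju //; lia.
Qed.

Lemma graft_out_of_range t i s : (i == 0) || (leaves t < i) -> graft t i s = t.
Proof.
elim/tree_nested_ind: t i => [|x ts IH] i; first by case: i => [|[|i]].
rewrite graft_node leaves_node => hi; congr Node.
elim: ts IH i hi => [|u ts IHts] //= [IHu IH] i.
rewrite leaves_forest_cons => hi; case: (leqP i (leaves u)) => iu.
  by rewrite IHu //; lia.
by rewrite IHts //; lia.
Qed.

Lemma leaves_graft t i s : 0 < i <= leaves t ->
  leaves (graft t i s) = leaves t + leaves s - 1.
Proof.
elim/tree_nested_ind: t i => [|x ts IH] i.
  by case: i => [|[|i]] //= _; lia.
rewrite graft_node !leaves_node.
elim: ts IH i => [|u ts IHts] /=; first by move=> _ i; rewrite /leaves_forest /=; lia.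
move=> [IHu IH] i; rewrite !leaves_forest_cons => hi.
case: (leqP i (leaves u)) => iu.
  by rewrite leaves_forest_cons IHu //; lia.
by rewrite leaves_forest_cons IHts //; lia.
Qed.

Lemma leaves_graft_ge t i s : 0 < leaves s -> leaves t <= leaves (graft t i s).
Proof.
move=> s_gt0; have [out_range|in_range] := boolP ((i == 0) || (leaves t < i)).
  by rewrite graft_out_of_range.
by rewrite leaves_graft; lia.
Qed.

(* Grafts cs at the consecutive leaves i, i+1, ...; the last tree is grafted
   first, so the earlier positions are not shifted. *)
Fixpoint graft_from t (i : nat) cs : tree E :=
  if cs is c :: cs' then graft (graft_from t i.+1 cs') i c else t.

Lemma graft_from_cat t i cs1 cs2 :
  graft_from t i (cs1 ++ cs2) = graft_from (graft_from t (i + size cs1) cs2) i cs1.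
Proof. by elim: cs1 i => [|c cs1 IH] i /=; rewrite ?addn0 // IH addSnnS. Qed.

Lemma graft_from_leaves x pre cs post :
  graft_from (Node x (pre ++ nseq (size cs) Leaf ++ post)) (leaves_forest pre).+1 cs =
  Node x (pre ++ cs ++ post).
Proof.
elim: cs pre => [|c cs IH] pre //=.
have := IH (rcons pre Leaf); rewrite leaves_forest_rcons addn1 cat_rcons /= => ->.
by rewrite graft_node -addn1 cat_rcons graft_forest_mid.
Qed.

Lemma graft_from_nseq x cs : graft_from (Node x (nseq (size cs) Leaf)) 1 cs = Node x cs.
Proof. by have := graft_from_leaves x [::] cs [::]; rewrite !cats0. Qed.

End Trees.

Section Relabelling.

Variables E F : Type.
Variable f : E -> F.

Lemma leaves_tmap (t : tree E) : leaves (tmap f t) = leaves t.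
Proof.
elim/tree_nested_ind: t => [|x ts IH] //; rewrite !leaves_node.
by elim: ts IH => [|u ts IHts] //= [IHu /IHts]; rewrite !leaves_forest_cons IHu => ->.
Qed.

Lemma tmap_graft (t : tree E) i s : tmap f (graft t i s) = graft (tmap f t) i (tmap f s).
Proof.
elim/tree_nested_ind: t i => [|x ts IH] i /=; first by case: eqP.
congr Node; elim: ts IH i => [|u ts IHts] //= [IHu IH] i.
by rewrite leaves_tmap; case: ifP => _ /=; rewrite ?IHu ?IHts.
Qed.

Lemma tmap_inj : injective f -> injective (tmap f).
Proof.
move=> f_inj; elim/tree_nested_ind => [|x ts IH] [|y ts'] //= [/f_inj -> e].
congr Node; elim: ts IH ts' e => [|u ts IHts] IH [|u' ts'] //= [eu ets].
by case: IH => IHu IH; rewrite (IHu _ eu) (IHts IH _ ets).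
Qed.

End Relabelling.

Lemma tmap_comp E F G (f : E -> F) (g : F -> G) (t : tree E) :
  tmap (fun x => g (f x)) t = tmap g (tmap f t).
Proof.
elim/tree_nested_ind: t => [|x ts IH] //=; congr Node.
by elim: ts IH => [|u ts IHts] //= [-> /IHts ->].
Qed.

Lemma tmap_id E (t : tree E) : tmap id t = t.
Proof.
elim/tree_nested_ind: t => [|x ts IH] //=; congr Node.
by elim: ts IH => [|u ts IHts] //= [-> /IHts ->].
Qed.

Section Envelope.

Variables (k : nat) (C : coloperad k).
Implicit Types (x y z : C) (t s u a : tree C) (ts cs : seq (tree C)).

Lemma wf_node x ts : wf (Node x ts) = [&& size ts == ar x, 1 < ar x & all (@wf k C) ts].
Proof. by []. Qed.

Lemma wf_leaves_gt0 t : wf t -> 0 < leaves t.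
Proof.
elim/tree_nested_ind: t => [|x ts IH] //.
rewrite wf_node leaves_node => /and3P[/eqP <- ar_gt1 wf_ts].
suff /size_le_leaves_forest : all (fun u => 0 < leaves u) ts by lia.
by elim: ts IH wf_ts {ar_gt1} => //= u ts IHts [IHu /IHts {}IHts] /andP[/IHu -> /IHts].
Qed.

Lemma size_le_leaves_wf ts : all (@wf k C) ts -> size ts <= leaves_forest ts.
Proof. by move=> wf_ts; apply/size_le_leaves_forest/(sub_all _ wf_ts)/wf_leaves_gt0. Qed.

Lemma wf_leaves_eq1 t : wf t -> leaves t = 1 -> t = Leaf.
Proof.
case: t => // x ts; rewrite wf_node leaves_node => /and3P[/eqP ts_ar ar_gt1 /size_le_leaves_wf].
by lia.
Qed.

Lemma wf_graft t i s : wf t -> wf s -> wf (graft t i s).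
Proof.
elim/tree_nested_ind: t i => [|x ts IH] i; first by rewrite /=; case: eqP.
rewrite graft_node !wf_node size_graft_forest => /and3P[-> -> wf_ts] wf_s /=.
by elim: ts IH wf_ts i => //= u ts IHts [IHu IH] /andP[wf_u wf_ts] i; case: ifP => _ /=;
  rewrite ?IHu ?wf_u ?IHts.
Qed.

Lemma wf_corolla x : 1 < ar x -> wf (corolla x).
Proof. by move=> ar_gt1; rewrite wf_node size_nseq eqxx ar_gt1; elim: (ar x). Qed.

Lemma leaves_corolla x : leaves (corolla x) = ar x.
Proof. by rewrite leaves_node leaves_forest_nseq. Qed.

Lemma graft_corolla x i s : 0 < i <= ar x ->
  graft (corolla x) i s = Node x (nseq i.-1 Leaf ++ s :: nseq (ar x - i) Leaf).
Proof.
move=> i_ar; rewrite /corolla; set n := ar x - i.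
have -> : ar x = i.-1 + (1 + n) by rewrite /n; lia.
rewrite nseqD add1n graft_node.
have := @graft_forest_mid _ s (nseq i.-1 Leaf) Leaf (nseq n Leaf) 1 isT.
by rewrite leaves_forest_nseq addn1 prednK => [->|]; last lia.
Qed.

Lemma graft_from_corolla x ts : size ts = ar x -> graft_from (corolla x) 1 ts = Node x ts.
Proof. by rewrite /corolla => <-; apply: graft_from_nseq. Qed.

Lemma leaves_graft_from_ge a i cs : all (@wf k C) cs -> leaves a <= leaves (graft_from a i cs).
Proof.
elim: cs i => [|c cs IH] i //= /andP[/wf_leaves_gt0 c_gt0 /(IH i.+1)].
by move/leq_trans; apply; apply: leaves_graft_ge.
Qed.

Lemma wf_graft_from a i cs : wf a -> all (@wf k C) cs -> wf (graft_from a i cs).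
Proof.
by elim: cs i => [|c cs IH] i //= wf_a /andP[wf_c wf_cs]; rewrite wf_graft ?IH.
Qed.

Lemma graft_from_child x d cs pre post j : 0 < j -> j + size cs <= leaves d + 1 ->
  all (@wf k C) cs ->
  graft_from (Node x (pre ++ d :: post)) (leaves_forest pre + j) cs =
  Node x (pre ++ graft_from d j cs :: post).
Proof.
elim: cs j => [|c cs IH] j //= j_gt0 j_le /andP[wf_c wf_cs].
rewrite -addnS IH //; last by lia.
rewrite graft_node graft_forest_mid //.
by have := leaves_graft_from_ge d j.+1 wf_cs; lia.
Qed.

Lemma comp_defined x i y z : Defs.comp x i y = Some z -> 0 < i <= ar x /\ out y = inc x i.
Proof. by move=> e; apply/compP; exists z. Qed.

Lemma envc_wf t t' : envc t t' -> [/\ wf t, wf t' & leaves t = leaves t'].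
Proof.
elim=> {t t'}.
- move=> x y z i x_gt1 y_gt1 e; have [i_x _] := comp_defined e; have ar_z := comp_ar e.
  have z_gt1 : 1 < ar z by lia.
  by rewrite leaves_graft !leaves_corolla // wf_graft ?wf_corolla //; split=> //; lia.
- by [].
- by move=> t t' _ [].
- by move=> t t' t'' _ [wf_t _ ->] _ [].
- move=> t t' s s' i _ [wf_t wf_t' l_t] _ [wf_s wf_s' l_s] i_t.
  by rewrite !wf_graft // !leaves_graft -?l_t // l_s.
Qed.

Lemma envc_graft_from_l a a' i cs : envc a a' -> 0 < i -> i + size cs <= leaves a + 1 ->
  all (@wf k C) cs -> envc (graft_from a i cs) (graft_from a' i cs).
Proof.
move=> aa'; elim: cs i => [|c cs IH] i //= i_gt0 i_le /andP[wf_c wf_cs].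
apply: envc_ctx; [apply: IH => //; lia | exact: envc_refl |].
by have := leaves_graft_from_ge a i.+1 wf_cs; lia.
Qed.

Lemma envc_graft_from_r E (g h : tree E -> tree C) a i (ts : seq (tree E)) :
  wf a -> 0 < i -> i + size ts <= leaves a + 1 ->
  all_tree (fun v : tree E => envc (g v) (h v)) ts ->
  envc (graft_from a i (map g ts)) (graft_from a i (map h ts)).
Proof.
move=> wf_a; elim: ts i => [|t ts IH] i /= i_gt0 i_le; first by move=> _; apply: envc_refl.
move=> [gh_t gh_ts]; apply: envc_ctx => //; first by apply: IH => //; lia.
have wf_gts : all (@wf k C) (map g ts).
  by elim: ts gh_ts {IH i_le} => //= u ts IHts [/envc_wf[-> _ _] /IHts].
by have := leaves_graft_from_ge a i.+1 wf_gts; lia.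
Qed.

Lemma env_morph_graft_from (C' : coloperad k) (F : tree C -> tree C') a i cs :
  env_morph F -> wf a -> 0 < i -> i + size cs <= leaves a + 1 -> all (@wf k C) cs ->
  envc (F (graft_from a i cs)) (graft_from (F a) i (map F cs)).
Proof.
move=> [F_wf [_ F_graft]] wf_a; elim: cs i => [|c cs IH] i /= i_gt0 i_le.
  by move=> _; apply: envc_refl; case: (F_wf a wf_a).
move=> /andP[wf_c wf_cs]; have wf_g := wf_graft_from i.+1 wf_a wf_cs.
have g_ge := leaves_graft_from_ge a i.+1 wf_cs.
apply: envc_trans; first by apply: F_graft => //; lia.
apply: envc_ctx; [apply: IH => //; lia | exact/envc_refl/(F_wf c wf_c).1 |].
by case: (F_wf _ wf_g) => _ ->; lia.
Qed.

Lemma graft_corolla_graft_from x y ps us qs :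
  size ps + (size qs).+1 = ar x -> size us = ar y -> all (@wf k C) us ->
  graft_from (graft (corolla x) (size ps).+1 (corolla y)) 1 (ps ++ us ++ qs) =
  Node x (ps ++ Node y us :: qs).
Proof.
move=> ar_x ar_y wf_us; rewrite graft_corolla /=; last by lia.
rewrite (_ : ar x - (size ps).+1 = size qs); last by lia.
have graft_qs := graft_from_leaves x (rcons (nseq (size ps) Leaf) (corolla y)) qs [::].
rewrite leaves_forest_rcons leaves_forest_nseq leaves_corolla -ar_y !cat_rcons !cats0 in graft_qs.
have graft_us := @graft_from_child x (corolla y) us (nseq (size ps) Leaf) qs 1 isT.
rewrite leaves_corolla -ar_y addn1 leaves_forest_nseq graft_from_corolla // in graft_us.
rewrite 2!graft_from_cat add1n graft_qs -addn1 graft_us //.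
by have := graft_from_leaves x [::] ps (Node y us :: qs).
Qed.

End Envelope.

Section NormalForm.

Variables (k : nat) (C : coloperad k).
Implicit Types (x y z : C) (t s u : tree C) (ts cs : seq (tree C)).

Inductive contract : tree C -> tree C -> Prop :=
| contract_root x y z ps us qs : Defs.comp x (size ps).+1 y = Some z ->
    contract (Node x (ps ++ Node y us :: qs)) (Node z (ps ++ us ++ qs))
| contract_child x ps c c' qs : contract c c' ->
    contract (Node x (ps ++ c :: qs)) (Node x (ps ++ c' :: qs)).

Local Notation contract_star := (clos_refl_trans (tree C) contract).
#[local] Arguments rt_step {A R x y}.
#[local] Arguments rt_refl {A R x}.
#[local] Arguments rt_trans {A R x y z}.

Lemma leaves_contract t t' : contract t t' -> leaves t' = leaves t.
Proof.
elim=> {t t'} [x y z ps us qs _|x ps c c' qs _ IH];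
  by rewrite !leaves_node !leaves_forest_cat !leaves_forest_cons ?leaves_node ?IH.
Qed.

Lemma wf_contract t t' : contract t t' -> wf t -> wf t'.
Proof.
elim=> {t t'} [x y z ps us qs e|x ps c c' qs _ IH]; rewrite !wf_node !size_cat !all_cat.
  move=> /and3P[/eqP ar_x x_gt1 /and3P[wf_ps wf_y wf_qs]]; move: wf_y ar_x.
  rewrite wf_node /= => /and3P[/eqP ar_y y_gt1 wf_us] ar_x; have ar_z := comp_ar e.
  by apply/and3P; split; [apply/eqP; lia | lia | rewrite wf_ps wf_us].
by move=> /and3P[-> -> /and3P[-> /IH wf_c' wf_qs]]; rewrite /= wf_c'.
Qed.

Lemma contract_graft t t' i s : contract t t' -> 0 < i <= leaves t ->
  contract (graft t i s) (graft t' i s).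
Proof.
move=> tt'; elim: tt' i => {t t'} [x y z ps us qs e|x ps c c' qs cc' IH] i.
  rewrite leaves_node !leaves_forest_cat leaves_forest_cons leaves_node => i_le.
  rewrite !graft_node !(graft_forest_cat _ ps); try lia.
  case: (leqP i (leaves_forest ps)) => i_ps.
    by apply: contract_root; rewrite size_graft_forest.
  rewrite graft_forest_cat ?graft_forest_cons ?leaves_node; last by lia.
  case: (leqP (i - leaves_forest ps) (leaves_forest us)) => i_us;
    rewrite ?graft_node; exact: contract_root.
rewrite leaves_node !leaves_forest_cat leaves_forest_cons => i_le.
rewrite !graft_node !graft_forest_cat; try lia.
case: (leqP i (leaves_forest ps)) => i_ps; first exact: contract_child.
rewrite !graft_forest_cons (leaves_contract cc'); case: ifP => i_c; last exact: contract_child.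
by apply/contract_child/IH; lia.
Qed.

Lemma envc_contract t t' : contract t t' -> wf t -> envc t t'.
Proof.
elim=> {t t'} [x y z ps us qs e|x ps c c' qs _ IH]; rewrite wf_node all_cat.
  move=> /and3P[/eqP ar_x x_gt1 /and3P[wf_ps wf_y wf_qs]]; move: wf_y.
  rewrite wf_node => /and3P[/eqP ar_y y_gt1 wf_us]; rewrite size_cat /= in ar_x.
  have ar_z := comp_ar e.
  have wf_cs : all (@wf k C) (ps ++ us ++ qs) by rewrite !all_cat wf_ps wf_us.
  have size_cs : size (ps ++ us ++ qs) = ar z by rewrite !size_cat; lia.
  rewrite -graft_corolla_graft_from // -(graft_from_corolla size_cs).
  apply: envc_graft_from_l => //; first exact: envc_gen.
  by rewrite leaves_graft !leaves_corolla ?size_cs; lia.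
move=> /and3P[ar_x x_gt1 /and3P[wf_ps /IH cc' wf_qs]].
have graft_child d : Node x (ps ++ d :: qs) =
    graft (Node x (ps ++ Leaf :: qs)) (leaves_forest ps + 1) d.
  by rewrite graft_node graft_forest_mid.
rewrite (graft_child c) (graft_child c'); apply: envc_ctx => //.
  by apply: envc_refl; rewrite wf_node all_cat !size_cat x_gt1 wf_ps -(size_cat ps (c :: qs)) ar_x.
by rewrite leaves_node leaves_forest_cat leaves_forest_cons /=; lia.
Qed.

Lemma leaves_contract_star t t' : contract_star t t' -> leaves t' = leaves t.
Proof. by elim=> {t t'} [t t' /leaves_contract|t|t t' t'' _ <- _ <-]. Qed.

Lemma wf_contract_star t t' : contract_star t t' -> wf t -> wf t'.
Proof. by elim=> {t t'} [t t' /wf_contract|t|t t' t'' _ IH _ IH'] // /IH /IH'. Qed.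

Lemma envc_contract_star t t' : contract_star t t' -> wf t -> envc t t'.
Proof.
elim=> {t t'} [t t' /envc_contract //|t /envc_refl //|t t' t'' tt' IH _ IH' wf_t].
exact: envc_trans (IH wf_t) (IH' (wf_contract_star tt' wf_t)).
Qed.

Lemma contract_star_graft t t' i s : contract_star t t' -> 0 < i <= leaves t ->
  contract_star (graft t i s) (graft t' i s).
Proof.
elim=> {t t'} [t t' tt' i_t|t _|t t' t'' tt' IH _ IH' i_t]; first exact/rt_step/contract_graft.
  exact: rt_refl.
by apply: rt_trans (IH i_t) (IH' _); rewrite (leaves_contract_star tt').
Qed.

Lemma contract_star_child x ps c c' qs : contract_star c c' ->
  contract_star (Node x (ps ++ c :: qs)) (Node x (ps ++ c' :: qs)).
Proof.
elim=> {c c'} [c c' cc'|c|c c' c'' _ IH _ IH'].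
- exact/rt_step/contract_child.
- exact: rt_refl.
- exact: rt_trans IH IH'.
Qed.

Definition absorb (st : C * seq (tree C)) (c : tree C) : C * seq (tree C) :=
  let: (z, acc) := st in
  if c is Node y us then
    if Defs.comp z (size acc).+1 y is Some z' then (z', acc ++ us) else (z, rcons acc c)
  else (z, rcons acc c).

Fixpoint nf t : tree C :=
  if t is Node x ts then
    let st := foldl absorb (x, [::]) (map nf ts) in Node st.1 st.2
  else Leaf.

Lemma nf_node x ts :
  nf (Node x ts) = let st := foldl absorb (x, [::]) (map nf ts) in Node st.1 st.2.
Proof. by []. Qed.

Lemma contract_star_absorb z acc cs :
  contract_star (Node z (acc ++ cs)) (let st := foldl absorb (z, acc) cs in Node st.1 st.2).
Proof.
elim: cs z acc => [|c cs IH] z acc /=; first by rewrite cats0; apply: rt_refl.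
case: c => [|y us]; first by rewrite -cat_rcons; apply: IH.
case e: (Defs.comp z (size acc).+1 y) => [z'|]; last by rewrite -cat_rcons; apply: IH.
by apply: rt_trans (rt_step (contract_root _ _ e)) _; rewrite catA; apply: IH.
Qed.

Lemma contract_star_nf t : wf t -> contract_star t (nf t).
Proof.
elim/tree_nested_ind: t => [|x ts IH]; first by move=> _; apply: rt_refl.
rewrite wf_node nf_node => /and3P[_ _ wf_ts].
apply: rt_trans (contract_star_absorb x [::] (map nf ts)).
suff /(_ [::]) : forall ps, contract_star (Node x (ps ++ ts)) (Node x (ps ++ map nf ts)) by [].
elim: ts IH wf_ts => [|c ts IHts] IH wf_ts ps /=; first exact: rt_refl.
case: IH wf_ts => IHc IH /andP[wf_c wf_ts].
apply: rt_trans (contract_star_child _ _ _ (IHc wf_c)) _.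
by rewrite -!cat_rcons; apply: IHts.
Qed.

Lemma wf_nf t : wf t -> wf (nf t).
Proof. by move=> wf_t; apply: wf_contract_star (contract_star_nf wf_t) wf_t. Qed.

Lemma comp_shift_defined x w y xw i p : Defs.comp x i w = Some xw -> out y = inc x p ->
  i < p <= ar x -> exists r, Defs.comp xw (p + ar w - 1) y = Some r.
Proof.
move=> e y_p p_x; have [i_x _] := comp_defined e; have w_gt0 := ar_pos w.
have ar_xw := comp_ar e; apply/compP; split; first by lia.
rewrite (comp_inc e); last by lia.
by rewrite !ifF ?y_p; [congr inc; lia | lia | lia].
Qed.

(* Parallel associativity: a composition pending at a later input of the root
   survives the absorption of the earlier children. *)
Lemma absorb_fold_pending y cs : forall x xy p acc,
  Defs.comp x p y = Some xy -> size acc + size cs + 1 = p -> all (@wf k C) cs ->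
  let st := foldl absorb (x, acc) cs in
  exists2 z, Defs.comp st.1 (size st.2).+1 y = Some z & foldl absorb (xy, acc) cs = (z, st.2).
Proof.
elim: cs => [|c cs IH] x xy p acc e /=; first by rewrite addn0 addn1 => -> _; exists xy.
move=> p_eq /andP[wf_c wf_cs]; have [p_x y_p] := comp_defined e.
case: c wf_c p_eq => [|w vs] wf_c p_eq /=; first by apply: IH e _ wf_cs; rewrite size_rcons; lia.
move: wf_c; rewrite wf_node => /and3P[/eqP ar_w _ _].
have := @comp_par k C x w y (size acc).+1 p (ltn0Sn _) (ltac:(lia)) (ltac:(lia)).
rewrite e /=; case e': (Defs.comp x (size acc).+1 w) => [xw|] /= <-.
  have [r e_r] := @comp_shift_defined x w y xw (size acc).+1 p e' y_p (ltac:(lia)).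
  by rewrite e_r; apply: IH e_r _ wf_cs; rewrite size_cat ar_w; lia.
by apply: IH e _ wf_cs; rewrite size_rcons; lia.
Qed.

(* Sequential associativity: absorbing children into y and then y into w
   agrees with absorbing them directly into the composite of w and y. *)
Lemma absorb_fold_nested w acc cs : forall y wy us,
  Defs.comp w (size acc).+1 y = Some wy -> size us + size cs = ar y -> all (@wf k C) cs ->
  let st := foldl absorb (y, us) cs in
  exists2 z, Defs.comp w (size acc).+1 st.1 = Some z &
    foldl absorb (wy, acc ++ us) cs = (z, acc ++ st.2).
Proof.
elim: cs => [|c cs IH] y wy us e /=; first by move=> _ _; exists wy.
move=> size_y /andP[wf_c wf_cs]; have [p_w _] := comp_defined e.
case: c wf_c => [|v vs] wf_c /=.
  by rewrite rcons_cat; apply: IH e _ wf_cs; rewrite size_rcons; lia.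
move: wf_c; rewrite wf_node => /and3P[/eqP ar_v v_gt1 _].
have := @comp_seq k C w y v (size acc).+1 (size us).+1 p_w (ltac:(lia)).
rewrite e /= (_ : (size acc).+1 + (size us).+1 - 1 = (size (acc ++ us)).+1); last first.
  by rewrite size_cat; lia.
move=> ->; case e': (Defs.comp y (size us).+1 v) => [yv|] /=.
  have [r e_r] : exists r, Defs.comp w (size acc).+1 yv = Some r.
    by apply/compP; rewrite (comp_out e'); apply/comp_defined: e.
  rewrite e_r -catA; apply: IH e_r _ wf_cs.
  by rewrite size_cat (comp_ar e') ar_v; have := ar_pos v; lia.
by rewrite rcons_cat; apply: IH e _ wf_cs; rewrite size_rcons; lia.
Qed.

Lemma nf_contract_root x y z ps us qs : Defs.comp x (size ps).+1 y = Some z ->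
  wf (Node x (ps ++ Node y us :: qs)) ->
  nf (Node x (ps ++ Node y us :: qs)) = nf (Node z (ps ++ us ++ qs)).
Proof.
rewrite wf_node all_cat => e /and3P[_ _ /and3P[wf_ps wf_y wf_qs]].
move: wf_y; rewrite wf_node => /and3P[/eqP ar_y _ wf_us].
have wf_map ts : all (@wf k C) ts -> all (@wf k C) (map nf ts).
  by move=> wf_ts; rewrite all_map; apply: sub_all wf_ts => t /wf_nf.
rewrite !nf_node !map_cat /= !foldl_cat /=.
have [z1 e1 ->] := @absorb_fold_pending y (map nf ps) x z (size ps).+1 [::] e
  (ltac:(by rewrite size_map addn1)) (wf_map _ wf_ps).
move: e1; case: (foldl absorb (x, [::]) (map nf ps)) => x1 acc1 /= e1.
have [z2 e2] := @absorb_fold_nested x1 acc1 (map nf us) y z1 [::] e1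
  (ltac:(by rewrite size_map)) (wf_map _ wf_us).
rewrite cats0 => ->; move: e2.
by case: (foldl absorb (y, [::]) (map nf us)) => y1 us1 /= ->.
Qed.

Lemma nf_contract t t' : contract t t' -> wf t -> nf t = nf t'.
Proof.
elim=> {t t'} [x y z ps us qs e|x ps c c' qs _ IH]; first exact: nf_contract_root.
rewrite wf_node all_cat => /and3P[_ _ /and3P[_ /IH nf_c _]].
by rewrite !nf_node !map_cat /= nf_c.
Qed.

Lemma nf_contract_star t t' : contract_star t t' -> wf t -> nf t = nf t'.
Proof.
elim=> {t t'} [t t' /nf_contract //|//|t t' t'' tt' IH _ IH' wf_t].
by rewrite IH // IH' // (wf_contract_star tt').
Qed.

Lemma nf_idem t : wf t -> nf (nf t) = nf t.
Proof. by move=> wf_t; rewrite -(nf_contract_star (contract_star_nf wf_t)). Qed.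

Lemma nf_graft_nf t i s : wf s -> nf (graft t i (nf s)) = nf (graft t i s).
Proof.
move=> wf_s; elim/tree_nested_ind: t i => [|x ts IH] i /=; first by case: eqP; rewrite ?nf_idem.
congr (let st := foldl absorb _ _ in Node st.1 st.2).
elim: ts IH i => [|c ts IHts] //= [IHc IH] i.
by case: ifP => _ /=; rewrite ?IHc ?IHts.
Qed.

Lemma nf_graft t i s : wf t -> wf s -> 0 < i <= leaves t ->
  nf (graft t i s) = nf (graft (nf t) i (nf s)).
Proof.
move=> wf_t wf_s i_t; rewrite nf_graft_nf //.
exact/(nf_contract_star (contract_star_graft s (contract_star_nf wf_t) i_t))/wf_graft.
Qed.

Lemma envc_nf t t' : envc t t' -> nf t = nf t'.
Proof.
elim=> {t t'} [x y z i x_gt1 y_gt1 e|//|t t' _ -> //|t t' t'' _ -> _ -> //|].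
  have [i_x _] := comp_defined e.
  have -> : corolla z = Node z (nseq i.-1 Leaf ++ nseq (ar y) Leaf ++ nseq (ar x - i) Leaf).
    by rewrite /corolla -!nseqD (comp_ar e); congr (Node _ (nseq _ _)); lia.
  rewrite graft_corolla //; apply: nf_contract.
    by apply: contract_root; rewrite size_nseq prednK //; lia.
  by rewrite -graft_corolla // wf_graft ?wf_corolla.
move=> t t' s s' i tt' nf_t ss' nf_s i_t.
have [wf_t wf_t' l_t] := envc_wf tt'; have [wf_s wf_s' _] := envc_wf ss'.
by rewrite nf_graft // nf_t nf_s -nf_graft // -l_t.
Qed.

Lemma envc_nf_r t : wf t -> envc t (nf t).
Proof. by move=> wf_t; apply/envc_contract_star/wf_t/contract_star_nf. Qed.

End NormalForm.

Arguments absorb {k C}.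
Arguments nf {k C}.

Section Morphisms.

Variables (k : nat) (C1 C2 : coloperad k) (f : C1 -> C2).
Hypothesis f_morph : colmorph f.

Let ar_f : forall x, ar (f x) = ar x := f_morph.1.
Let comp_f : forall x y z i, Defs.comp x i y = Some z -> Defs.comp (f x) i (f y) = Some (f z) :=
  f_morph.2.

Lemma tmap_corolla x : tmap f (corolla x) = corolla (f x).
Proof. by rewrite /corolla /= ar_f map_nseq. Qed.

Lemma Env_map_corolla x : 1 < ar x -> envc (Env_map f (corolla x)) (corolla (f x)).
Proof.
by move=> x_gt1; rewrite /Env_map tmap_corolla; apply/envc_refl/wf_corolla; rewrite ar_f.
Qed.

Lemma wf_tmap t : wf t -> wf (tmap f t).
Proof.
elim/tree_nested_ind: t => [|x ts IH] //; rewrite !wf_node size_map ar_f.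
move=> /and3P[-> -> wf_ts]; rewrite all_map.
by elim: ts IH wf_ts => [|u ts IHts] //= [IHu IH] /andP[/IHu -> /(IHts IH)].
Qed.

Lemma envc_tmap t t' : envc t t' -> envc (tmap f t) (tmap f t').
Proof.
elim=> {t t'} [x y z i x_gt1 y_gt1 e|t /wf_tmap /envc_refl //|t t' _ /envc_sym //|
               t t' t'' _ IH _ /(envc_trans IH) //|t t' s s' i _ IHt _ IHs i_t].
  by rewrite tmap_graft !tmap_corolla; apply: envc_gen; rewrite ?ar_f //; apply: comp_f.
by rewrite !tmap_graft; apply: envc_ctx; rewrite ?leaves_tmap.
Qed.

Lemma Env_map_morph : env_morph (Env_map f).
Proof.
split; [|split] => [t wf_t|//|t s i wf_t wf_s _]; first by rewrite wf_tmap ?leaves_tmap.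
  exact: envc_tmap.
by rewrite /Env_map tmap_graft; apply/envc_refl/wf_graft; apply: wf_tmap.
Qed.

Lemma Env_map_unique F : env_morph F ->
  (forall x, 1 < ar x -> envc (F (corolla x)) (corolla (f x))) ->
  forall t, wf t -> envc (F t) (Env_map f t).
Proof.
move=> F_morph F_corolla; have [F_wf _] := F_morph; rewrite /Env_map.
elim/tree_nested_ind => [|x ts IH] wf_t.
  by have [wf_F /(wf_leaves_eq1 wf_F) ->] := F_wf _ wf_t; apply: envc_refl.
move: wf_t; rewrite wf_node => /and3P[/eqP size_ts x_gt1 wf_ts].
have size_fts : size (map (tmap f) ts) = ar (f x) by rewrite size_map ar_f.
rewrite -{1}(graft_from_corolla size_ts) [tmap f _]/= -(graft_from_corolla size_fts).
apply: envc_trans (env_morph_graft_from F_morph (wf_corolla x_gt1) (ltn0Sn 0) _ wf_ts) _.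
  by rewrite leaves_corolla size_ts addn1.
have leaves_Fx : leaves (F (corolla x)) = ar x.
  by rewrite (F_wf _ (wf_corolla x_gt1)).2 leaves_corolla.
apply: envc_trans (envc_graft_from_l (F_corolla x x_gt1) (ltn0Sn 0) _ _) _.
- by rewrite size_map leaves_Fx size_ts addn1.
- by rewrite all_map; apply: sub_all wf_ts => t /F_wf[].
apply: envc_graft_from_r; rewrite ?wf_corolla ?leaves_corolla ?ar_f ?size_ts ?addn1 //.
by elim: ts IH wf_ts {size_ts size_fts} => //= u ts IHts [IHu IH] /andP[/IHu gh_u /(IHts IH)].
Qed.

Definition colour_map c := out (f (unit C1 c)).

Lemma morph_unit c : f (unit C1 c) = unit C2 (colour_map c).
Proof.
have := ar_f (unit C1 c); rewrite unit_ar => /ar1_unit[c' e].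
by rewrite /colour_map e unit_out.
Qed.

Lemma out_morph y : out (f y) = colour_map (out y).
Proof.
have [_ ->] := comp_defined (comp_f (comp_unitl y)).
by rewrite morph_unit unit_inc.
Qed.

Lemma inc_morph x i : 0 < i <= ar x -> inc (f x) i = colour_map (inc x i).
Proof. by move=> i_x; have [_ <-] := comp_defined (comp_f (comp_unitr i_x)). Qed.

Lemma colour_map_inj : injective f -> injective colour_map.
Proof.
move=> f_inj c c' e; have : unit C1 c = unit C1 c' by apply: f_inj; rewrite !morph_unit e.
by move/(congr1 (@out k C1)); rewrite !unit_out.
Qed.

Lemma comp_morph_None x i y : injective f ->
  Defs.comp x i y = None -> Defs.comp (f x) i (f y) = None.
Proof.
move=> f_inj e; case e': (Defs.comp (f x) i (f y)) => [w|] //.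
have [i_x colour_y] := comp_defined e'; rewrite ar_f in i_x.
rewrite out_morph inc_morph // in colour_y.
have [z e''] : exists z, Defs.comp x i y = Some z by apply/compP; split=> //; apply: colour_map_inj.
by rewrite e'' in e.
Qed.

Lemma foldl_absorb_tmap x acc ts : injective f ->
  foldl absorb (f x, map (tmap f) acc) (map (tmap f) ts) =
  let st := foldl absorb (x, acc) ts in (f st.1, map (tmap f) st.2).
Proof.
move=> f_inj; elim: ts x acc => [|[|y us] ts IH] x acc //=.
  by rewrite -(map_rcons (tmap f) acc Leaf) IH.
rewrite size_map; case e: (Defs.comp x (size acc).+1 y) => [xy|].
  by rewrite (comp_f e) -map_cat IH.
by rewrite (comp_morph_None f_inj e) -(map_rcons (tmap f) acc (Node y us)) IH.
Qed.

Lemma nf_tmap t : injective f -> nf (tmap f t) = tmap f (nf t).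
Proof.
move=> f_inj; elim/tree_nested_ind: t => [|x ts IH] //=.
have -> : map nf (map (tmap f) ts) = map (tmap f) (map nf ts).
  by elim: ts IH => [|t ts IHts] //= [-> /IHts ->].
by rewrite -[[::]]/(map (tmap f) [::]) foldl_absorb_tmap.
Qed.

Lemma Env_map_inj : injective f -> env_injective (Env_map f).
Proof.
move=> f_inj t t' wf_t wf_t' /envc_nf; rewrite !nf_tmap // => /(tmap_inj f_inj) nf_tt'.
by apply: envc_trans (envc_nf_r wf_t) _; rewrite nf_tt'; apply/envc_sym/envc_nf_r.
Qed.

Lemma tmap_wf_surj : (forall z, exists x, f x = z) ->
  forall s, wf s -> exists2 t, wf t & tmap f t = s.
Proof.
move=> f_surj; elim/tree_nested_ind => [|z ss IH]; first by exists Leaf.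
rewrite wf_node => /and3P[/eqP size_ss z_gt1 wf_ss]; have [x fx] := f_surj z.
have [ts wf_ts ts_ss] : exists2 ts, all (@wf k C1) ts & map (tmap f) ts = ss.
  elim: ss IH wf_ss {size_ss} => [|s ss IHss] /=; first by exists [::].
  move=> [IHs /IHss IH] /andP[/IHs[t wf_t <-] /IH[ts wf_ts <-]].
  by exists (t :: ts); rewrite //= wf_t.
exists (Node x ts); last by rewrite /= fx ts_ss.
by rewrite wf_node wf_ts -ar_f fx z_gt1 -size_ss -ts_ss size_map eqxx.
Qed.

Lemma Env_map_surj : (forall z, exists x, f x = z) -> env_surjective (Env_map f).
Proof.
move=> f_surj s /(tmap_wf_surj f_surj)[t wf_t <-].
by exists t; split=> //; apply/envc_refl/wf_tmap.
Qed.

End Morphisms.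

Theorem theorem1p2 (k : nat) (hk : 0 < k) :
  (forall (C1 C2 : coloperad k) (f : C1 -> C2), colmorph f ->
     env_morph (Env_map f)
     /\ (forall x : C1, 1 < ar x -> envc (Env_map f (corolla x)) (corolla (f x)))
     /\ (forall F : tree C1 -> tree C2, env_morph F ->
           (forall x : C1, 1 < ar x -> envc (F (corolla x)) (corolla (f x))) ->
           forall t, wf t -> envc (F t) (Env_map f t)))
  /\
  (forall (C1 C2 C3 : coloperad k) (f : C1 -> C2) (g : C2 -> C3),
     colmorph f -> colmorph g ->
     forall t : tree C1, wf t ->
       envc (Env_map (fun x => g (f x)) t) (Env_map g (Env_map f t)))
  /\
  (forall (C : coloperad k) (t : tree C), wf t ->
       envc (Env_map (fun x : C => x) t) t)
  /\
  (forall (C1 C2 : coloperad k) (f : C1 -> C2), colmorph f ->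
     (forall x y : C1, f x = f y -> x = y) -> env_injective (Env_map f))
  /\
  (forall (C1 C2 : coloperad k) (f : C1 -> C2), colmorph f ->
     (forall z : C2, exists x : C1, f x = z) -> env_surjective (Env_map f)).
Proof.
split.
  move=> C1 C2 f f_morph; split; first exact: Env_map_morph.
  by split; [apply: Env_map_corolla | apply: Env_map_unique].
split.
  move=> C1 C2 C3 f g f_morph g_morph t wf_t; rewrite /Env_map tmap_comp.
  by apply/envc_refl/wf_tmap/wf_tmap.
split; first by move=> C t wf_t; rewrite /Env_map tmap_id; apply: envc_refl.
by split=> C1 C2 f f_morph; [apply: Env_map_inj | apply: Env_map_surj].
Qed.
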